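(* Let $X$ be a $T_1$ space and $\mathcal{P}$ an ideal of closed subsets of $X$ such that $X$ is $\tau\mathcal{P}$-pseudocompact. Then $C(X)_\mathcal{P}$ is closed under uniform limits if and only if $C^*(X)_\mathcal{P}$, equipped with the norm $\|f\|=\sup\{|f(x)|\colon x\in X\}$, is a Banach space.
   Context: An ideal of closed subsets of $X$ is a family $\mathcal{P}$ of closed subsets closed under finite unions and under passing to closed subsets. $D_f$ is the set of discontinuity points of $f\in\mathbb{R}^X$; $C(X)_\mathcal{P}=\{f\in\mathbb{R}^X\colon \overline{D_f}\in\mathcal{P}\}$ and $C^*(X)_\mathcal{P}$ is the set of its bounded members. $X$ is $\tau\mathcal{P}$-pseudocompact if $C(X)_\mathcal{P}=C^*(X)_\mathcal{P}$. $C(X)_\mathcal{P}$ is closed under uniform limits if whenever a sequence in $C(X)_\mathcal{P}$ converges uniformly on $X$ to $f\in\mathbb{R}^X$, then $f\in C(X)_\mathcal{P}$. *)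

From HB Require Import structures.
From mathcomp Require Import all_boot all_order all_algebra.
From mathcomp Require Import all_classical all_reals all_analysis.
Set Implicit Arguments. Unset Strict Implicit. Unset Printing Implicit Defensive.
Import Order.TTheory GRing.Theory Num.Theory numFieldNormedType.Exports.
Local Open Scope classical_set_scope.
Local Open Scope ring_scope.

(* An ideal of closed subsets of X: a (nonempty, hence containing the empty
   set) family of closed sets, closed under finite unions and under passing
   to closed subsets. *)
Definition closed_ideal (X : topologicalType) (P : set (set X)) : Prop :=
  [/\ (forall A, P A -> closed A),
      P set0,
      (forall A B, P A -> P B -> P (A `|` B)) &
      (forall A B, P A -> closed B -> B `<=` A -> P B)].

Definition discont_pts (X : topologicalType) (R : realType) (f : X -> R) : set X :=
  [set x | ~ {for x, continuous f}].

Definition CP (X : topologicalType) (R : realType) (P : set (set X)) : set (X -> R) :=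
  [set f | P (closure (discont_pts f))].
Arguments CP {X} R P.

Definition bounded_fun (X : Type) (R : realType) (f : X -> R) : Prop :=
  exists M : R, forall x, `|f x| <= M.

Definition CPstar (X : topologicalType) (R : realType) (P : set (set X)) : set (X -> R) :=
  [set f | CP R P f /\ bounded_fun f].
Arguments CPstar {X} R P.

Definition tauP_pseudocompact (X : topologicalType) (R : realType) (P : set (set X)) : Prop :=
  CP R P = CPstar R P.

Definition unif_conv (X : Type) (R : realType) (f : nat -> X -> R) (g : X -> R) : Prop :=
  forall e : R, 0 < e -> exists N : nat, forall n, (N <= n)%N -> forall x, `|f n x - g x| < e.

Definition closed_under_unif_limits (X : topologicalType) (R : realType) (P : set (set X)) : Prop :=
  forall (f : nat -> X -> R) (g : X -> R),
    (forall n, CP R P (f n)) -> unif_conv f g -> CP R P g.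

Definition sup_norm (X : Type) (R : realType) (f : X -> R) : R :=
  sup [set `|f x| | x in [set: X]].

(* A set of real functions on X, equipped with the sup norm, is a Banach
   space: it is a linear subspace of R^X (so a normed space for the sup norm,
   its elements being bounded) and every Cauchy sequence for the sup norm
   converges in the sup norm to an element of the set. *)
Definition is_banach_sup (X : Type) (R : realType) (S : set (X -> R)) : Prop :=
  [/\ (forall f, S f -> bounded_fun f),
      S (fun _ => 0),
      (forall f g, S f -> S g -> S (fun x => f x + g x)),
      (forall (a : R) f, S f -> S (fun x => a * f x)) &
      (forall u : nat -> X -> R, (forall n, S (u n)) ->
         (forall e : R, 0 < e -> exists N : nat, forall m n, (N <= m)%N -> (N <= n)%N ->
             sup_norm (fun x => u m x - u n x) < e) ->
         exists2 g, S g &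
           forall e : R, 0 < e -> exists N : nat, forall n, (N <= n)%N ->
             sup_norm (fun x => u n x - g x) < e)].

From Pilot Require Import Defs.
From HB Require Import structures.
From mathcomp Require Import all_boot all_order all_algebra.
From mathcomp Require Import all_classical all_reals all_analysis.
Set Implicit Arguments. Unset Strict Implicit. Unset Printing Implicit Defensive.
Import Order.TTheory GRing.Theory Num.Theory numFieldNormedType.Exports.
Local Open Scope classical_set_scope.
Local Open Scope ring_scope.

(* On bounded functions, convergence and the Cauchy property for the sup norm
   coincide with their uniform counterparts, and R^X is complete for uniform
   convergence. C(X)_P is a linear space because D_(f+g) and D_(af) lie in
   D_f u D_g. As tau-P-pseudocompactness gives C(X)_P = C*(X)_P, both sides
   of the equivalence say that this space contains the uniform limits of its
   uniformly Cauchy sequences. *)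

Section UniformConvergence.
Variables (R : realType) (X : Type).
Implicit Types (f g h : X -> R) (u : nat -> X -> R).

Let half_gt0 (e : R) : 0 < e -> 0 < e / 2.
Proof. by move=> e_gt0; rewrite divr_gt0. Qed.

Let half_lt (e : R) : 0 < e -> e / 2 < e.
Proof. by move=> e_gt0; rewrite ltr_pdivrMr // ltr_pMr // ltr1n. Qed.

Definition unif_cauchy u := forall e : R, 0 < e -> exists N : nat,
  forall m n, (N <= m)%N -> (N <= n)%N -> forall x, `|u m x - u n x| < e.

Definition sup_norm_cauchy u := forall e : R, 0 < e -> exists N : nat,
  forall m n, (N <= m)%N -> (N <= n)%N -> sup_norm (fun x => u m x - u n x) < e.

Definition sup_norm_cvg u g := forall e : R, 0 < e -> exists N : nat,
  forall n, (N <= n)%N -> sup_norm (fun x => u n x - g x) < e.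

Definition sup_norm_complete (S : set (X -> R)) := forall u, (forall n, S (u n)) ->
  sup_norm_cauchy u -> exists2 g, S g & sup_norm_cvg u g.

Lemma bounded_funD f g :
  Defs.bounded_fun f -> Defs.bounded_fun g -> Defs.bounded_fun (fun x => f x + g x).
Proof.
move=> [M fM] [N gN]; exists (M + N) => x.
by rewrite (le_trans (ler_normD _ _)) // lerD.
Qed.

Lemma bounded_funB f g :
  Defs.bounded_fun f -> Defs.bounded_fun g -> Defs.bounded_fun (fun x => f x - g x).
Proof.
move=> [M fM] [N gN]; exists (M + N) => x.
by rewrite (le_trans (ler_normB _ _)) // lerD.
Qed.

Lemma bounded_funZ (a : R) f :
  Defs.bounded_fun f -> Defs.bounded_fun (fun x => a * f x).
Proof. by move=> [M fM]; exists (`|a| * M) => x; rewrite normrM ler_wpM2l. Qed.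

Lemma ler_sup_norm f x : Defs.bounded_fun f -> `|f x| <= sup_norm f.
Proof.
move=> [M fM]; apply: ub_le_sup; last by exists x.
by exists M => _ [y _ <-].
Qed.

Lemma sup_norm_le f e : 0 <= e -> (forall x, `|f x| <= e) -> sup_norm f <= e.
Proof.
move=> e_ge0 fe; rewrite /sup_norm; have [[y]|X0] := pselect (inhabited X).
  by apply: ge_sup => [|_ [z _ <-]]; [exists `|f y|, y | exact: fe].
rewrite (_ : [set _ | _ in _] = set0) ?sup0 //.
by apply/seteqP; split=> // z [y _ _]; exact: X0 (inhabits y).
Qed.

Lemma sup_norm_lt f e : 0 < e -> (forall x, `|f x| < e / 2) -> sup_norm f < e.
Proof.
move=> e_gt0 fe; apply: le_lt_trans (half_lt e_gt0).
by apply: sup_norm_le => [|x]; [exact/ltW/half_gt0 | exact/ltW].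
Qed.

Lemma unif_cauchy_sup_norm u : unif_cauchy u -> sup_norm_cauchy u.
Proof.
move=> uC e e_gt0; have [N uN] := uC (e / 2) (half_gt0 e_gt0).
by exists N => m n Nm Nn; apply: sup_norm_lt => // x; apply: uN.
Qed.

Lemma sup_norm_cauchy_unif u :
  (forall n, Defs.bounded_fun (u n)) -> sup_norm_cauchy u -> unif_cauchy u.
Proof.
move=> ub uC e e_gt0; have [N uN] := uC e e_gt0; exists N => m n Nm Nn x.
exact: le_lt_trans (ler_sup_norm x (bounded_funB (ub m) (ub n))) (uN m n Nm Nn).
Qed.

Lemma unif_conv_sup_norm u g : unif_conv u g -> sup_norm_cvg u g.
Proof.
move=> ug e e_gt0; have [N uN] := ug (e / 2) (half_gt0 e_gt0).
by exists N => n Nn; apply: sup_norm_lt => // x; apply: uN.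
Qed.

Lemma sup_norm_cvg_unif u g :
  (forall n, Defs.bounded_fun (fun x => u n x - g x)) -> sup_norm_cvg u g -> unif_conv u g.
Proof.
move=> ugb ug e e_gt0; have [N uN] := ug e e_gt0; exists N => n Nn x.
exact: le_lt_trans (ler_sup_norm x (ugb n)) (uN n Nn).
Qed.

Lemma unif_conv_cauchy u g : unif_conv u g -> unif_cauchy u.
Proof.
move=> ug e e_gt0; have [N uN] := ug (e / 2) (half_gt0 e_gt0).
exists N => m n Nm Nn x; rewrite (splitr e).
by rewrite (le_lt_trans (ler_distD (g x) _ _)) // [`|g x - _|]distrC ltrD ?uN.
Qed.

Lemma unif_conv_pointwise u g x : unif_conv u g -> u n x @[n --> \oo] --> g x.
Proof.
move=> ug; apply/cvgrPdist_lt => e e_gt0; have [N uN] := ug e e_gt0.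
by exists N => // n Nn; rewrite distrC uN.
Qed.

Lemma unif_conv_unique u g h : unif_conv u g -> unif_conv u h -> g = h.
Proof.
move=> ug uh; apply/funext => x.
exact: cvg_unique (unif_conv_pointwise ug) (unif_conv_pointwise uh).
Qed.

Lemma unif_cauchy_cvg u : unif_cauchy u -> exists g, unif_conv u g.
Proof.
move=> uC; have u_cvg x : cvgn (u ^~ x).
  apply/cauchy_cvgP/cauchy_exP => e e_gt0; have [N uN] := uC e e_gt0.
  by exists (u N x), N => // n Nn; rewrite -ball_normE /= uN.
exists (fun x => limn (u ^~ x)) => e e_gt0.
have [N uN] := uC (e / 2) (half_gt0 e_gt0); exists N => n Nn x.
have : closed_ball (u n x) (e / 2) (limn (u ^~ x)).
  apply: (closed_cvg _ (@closed_ball_closed _ _ (u n x) (e / 2)) _ _ (u_cvg x)).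
  by rewrite closed_ballE ?half_gt0 //; exists N => // m Nm; apply/ltW/uN.
by rewrite closed_ballE ?half_gt0 //= => /le_lt_trans; apply; apply: half_lt.
Qed.

End UniformConvergence.

Section IdealOfClosedSets.
Variables (R : realType) (X : topologicalType).
Implicit Types (f g : X -> R).

Lemma discont_ptsD f g :
  discont_pts (fun x => f x + g x) `<=` discont_pts f `|` discont_pts g.
Proof. move=> x fgx; apply/not_andP => -[fx gx]; apply: fgx; exact: cvgD. Qed.

Lemma discont_ptsZ (a : R) f : discont_pts (fun x => a * f x) `<=` discont_pts f.
Proof. move=> x afx fx; apply: afx; apply: cvgM fx; exact: cvg_cst. Qed.

Lemma discont_pts_cst (c : R) : discont_pts (fun _ : X => c) = set0.
Proof. by apply/seteqP; split=> // x /=; apply; apply: cvg_cst. Qed.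

Variable P : set (set X).
Hypothesis P_ideal : closed_ideal P.

Lemma CP_discont_sub A h : P A -> discont_pts h `<=` A -> CP R P h.
Proof.
have [P_closed _ _ P_sub] := P_ideal; move=> PA hA.
apply: (P_sub A) => //; first exact: closed_closure.
by rewrite (closure_id A).1; [exact: closureS | exact: P_closed].
Qed.

Lemma CP_cst (c : R) : CP R P (fun _ => c).
Proof. by have [_ P0 _ _] := P_ideal; apply: (CP_discont_sub P0); rewrite discont_pts_cst. Qed.

Lemma CPD f g : CP R P f -> CP R P g -> CP R P (fun x => f x + g x).
Proof.
have [_ _ P_union _] := P_ideal; move=> Pf Pg.
apply: (CP_discont_sub (P_union _ _ Pf Pg)) => x /discont_ptsD[] fgx.
  by left; apply: subset_closure.
by right; apply: subset_closure.
Qed.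

Lemma CPZ (a : R) f : CP R P f -> CP R P (fun x => a * f x).
Proof. by move=> Pf; apply: (CP_discont_sub Pf) => x /discont_ptsZ /subset_closure. Qed.

Lemma CPstar_cst (c : R) : CPstar R P (fun _ => c).
Proof. by split; [exact: CP_cst | exists `|c|]. Qed.

Lemma CPstarD f g : CPstar R P f -> CPstar R P g -> CPstar R P (fun x => f x + g x).
Proof. by move=> [Pf fb] [Pg gb]; split; [exact: CPD | exact: bounded_funD]. Qed.

Lemma CPstarZ (a : R) f : CPstar R P f -> CPstar R P (fun x => a * f x).
Proof. by move=> [Pf fb]; split; [exact: CPZ | exact: bounded_funZ]. Qed.

Hypothesis P_pseudocompact : tauP_pseudocompact R P.

Lemma CPstar_sup_norm_complete :
  closed_under_unif_limits R P -> sup_norm_complete (CPstar R P).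
Proof.
move=> P_unif u Pu uC.
have [g ug] : exists g, unif_conv u g.
  by apply/unif_cauchy_cvg/sup_norm_cauchy_unif => // n; case: (Pu n).
exists g; last exact: unif_conv_sup_norm.
by rewrite -P_pseudocompact; apply: (P_unif u) => // n; case: (Pu n).
Qed.

Lemma sup_norm_complete_closed_under_unif_limits :
  sup_norm_complete (CPstar R P) -> closed_under_unif_limits R P.
Proof.
move=> P_complete u g Pu ug.
have {}Pu n : CPstar R P (u n) by rewrite -P_pseudocompact.
have [h [Ph hb] uh] := P_complete u Pu (unif_cauchy_sup_norm (unif_conv_cauchy ug)).
suff -> : g = h by [].
apply: (unif_conv_unique ug); apply: sup_norm_cvg_unif uh => n.
by apply: bounded_funB => //; case: (Pu n).
Qed.

End IdealOfClosedSets.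

Theorem theorem4p4 (R : realType) (X : topologicalType) (P : set (set X)) :
  accessible_space X ->
  closed_ideal P ->
  tauP_pseudocompact R P ->
  (closed_under_unif_limits R P <-> is_banach_sup (CPstar R P)).
Proof.
move=> _ P_ideal P_pseudocompact; split=> [P_unif | [_ _ _ _ P_complete]].
  split=> [f [] //|||| ].
  - exact: CPstar_cst.
  - exact: CPstarD.
  - exact: CPstarZ.
  - exact: CPstar_sup_norm_complete.
exact: sup_norm_complete_closed_under_unif_limits.
Qed.
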